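(* Let $n\ge1$ and $0\le k_1<k_2\le n$ be integers. Let $C_1\subseteq\mathbb{F}_4^n$ be a self-orthogonal additive code with $|C_1|=2^{n-k_1}$, and suppose every nonzero vector of $C_1^\perp$ has weight at least $d_1$. Let $d\ge1$ be an integer with \[ \sum_{i=1}^{d-1}3^i\binom{n}{i}<\frac{2^{n-k_1}-1}{2^{k_2-k_1}-1}. \] Then there exists a self-orthogonal additive code $C_2\subseteq C_1$ with $|C_2|=2^{n-k_2}$ such that every nonzero vector of $C_2^\perp$ has weight at least $\min\{d,d_1\}$.
   Context: $\mathbb{F}_4=\{0,1,\omega,\omega^2\}$, $\omega^2=\omega+1$, $\bar x=x^2$; trace inner product $\langle u,v\rangle=\sum_i(u_i\bar v_i+\bar u_iv_i)\in\mathbb{F}_2$ on $\mathbb{F}_4^n$; additive codes are $\mathbb{F}_2$-subspaces of $\mathbb{F}_4^n$; $C^\perp$ is the trace dual; self-orthogonal means $C\subseteq C^\perp$; weight = number of nonzero coordinates. *)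

From HB Require Import structures.
From mathcomp Require Import all_boot all_order all_algebra.
Set Implicit Arguments. Unset Strict Implicit. Unset Printing Implicit Defensive.

(* F4 = {0, 1, w, w^2} with w^2 = w + 1 *)
Inductive F4 := F0 | F1 | Fw | Fw2.

Definition F4_to_ord (x : F4) : 'I_4 :=
  match x with F0 => inord 0 | F1 => inord 1 | Fw => inord 2 | Fw2 => inord 3 end.
Definition F4_of_ord (i : 'I_4) : F4 :=
  match val i with 0 => F0 | 1 => F1 | 2 => Fw | _ => Fw2 end.
Lemma F4_ordK : cancel F4_to_ord F4_of_ord.
Proof. by case; rewrite /F4_of_ord /= inordK. Qed.

HB.instance Definition _ := Equality.copy F4 (can_type F4_ordK).
HB.instance Definition _ := Choice.copy F4 (can_type F4_ordK).
HB.instance Definition _ := Countable.copy F4 (can_type F4_ordK).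
HB.instance Definition _ := Finite.copy F4 (can_type F4_ordK).

Definition F4add (x y : F4) : F4 :=
  match x, y with
  | F0, z | z, F0 => z
  | F1, F1 | Fw, Fw | Fw2, Fw2 => F0
  | F1, Fw | Fw, F1 => Fw2
  | F1, Fw2 | Fw2, F1 => Fw
  | Fw, Fw2 | Fw2, Fw => F1
  end.

Definition F4mul (x y : F4) : F4 :=
  match x, y with
  | F0, _ | _, F0 => F0
  | F1, z | z, F1 => z
  | Fw, Fw => Fw2
  | Fw, Fw2 | Fw2, Fw => F1
  | Fw2, Fw2 => Fw
  end.

Definition F4conj (x : F4) : F4 := F4mul x x.

Definition vec (n : nat) := {ffun 'I_n -> F4}.

Definition vadd n (u v : vec n) : vec n := [ffun i => F4add (u i) (v i)].
Definition vzero n : vec n := [ffun _ => F0].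

(* trace inner product  sum_i (u_i conj(v_i) + conj(u_i) v_i), valued in F2 = {0,1} *)
Definition tip n (u v : vec n) : F4 :=
  foldr F4add F0
    [seq F4add (F4mul (u i) (F4conj (v i))) (F4mul (F4conj (u i)) (v i)) | i <- enum 'I_n].

Definition wt n (v : vec n) : nat := #|[set i | v i != F0]|.

(* additive code = F2-subspace of F4^n (closed under 0 and +, as char = 2) *)
Definition additive_code n (C : {set vec n}) : Prop :=
  vzero n \in C /\ forall u v, u \in C -> v \in C -> vadd u v \in C.

Definition tdual n (C : {set vec n}) : {set vec n} :=
  [set v | [forall u in C, tip u v == F0]].

Definition self_orth n (C : {set vec n}) : Prop := C \subset tdual C.

From HB Require Import structures.
From mathcomp Require Import all_boot all_order all_algebra zify.
Import GRing.Theory Num.Theory.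
Set Implicit Arguments. Unset Strict Implicit. Unset Printing Implicit Defensive.

(** A greedy Gilbert-Varshamov argument. Intersecting an additive code D with
  the hyperplane w^perp of a vector w outside D^perp halves D, and its dual only
  grows from D^perp to D^perp + {0, w}. Call a vector bad if it has weight in
  [1, d) and lies outside C1^perp; there are at most
  S = \sum_(1 <= i < d) 3^i C(n, i) of them. Since |D| |D^perp| = 4^n, as long
  as |D| > S + 1 some w avoids D^perp and all its translates by bad vectors, so
  the halved code still has no bad vector in its dual. The hypothesis on S
  guarantees that this can be repeated k2 - k1 times starting from C1; the
  dual of the resulting code then only contains vectors of C1^perp (weight at
  least d1) and vectors of weight at least d. *)

Fact F4_addA : associative F4add. Proof. by do 3!case. Qed.
Fact F4_addC : commutative F4add. Proof. by do 2!case. Qed.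
Fact F4_add0 : left_id F0 F4add. Proof. by case. Qed.
Fact F4_addNr : left_inverse F0 id F4add. Proof. by case. Qed.
HB.instance Definition _ :=
  GRing.isZmodule.Build F4 F4_addA F4_addC F4_add0 F4_addNr.

Lemma F4_of_ordK : cancel F4_of_ord F4_to_ord.
Proof. by case=> [[|[|[|[|?]]]] ?] //; apply/val_inj; rewrite /= inordK. Qed.

Lemma card_F4 : #|{: F4}| = 4.
Proof.
rewrite -[RHS]card_ord; apply: bij_eq_card.
by exists F4_of_ord; [exact: F4_ordK | exact: F4_of_ordK].
Qed.

Lemma sum_mem_card (T : finType) (A : {pred T}) : \sum_x (x \in A) = #|A|.
Proof.
by rewrite -sum1_card [RHS]big_mkcond; apply: eq_bigr => x _; case: (x \in A).
Qed.

Lemma card_set_in_sum (T : finType) (A : {pred T}) (P : pred T) :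
  #|[set x in A | P x]| = \sum_(x in A) P x.
Proof.
rewrite -sum1dep_card big_mkcondr /=.
by apply: eq_bigr => x _; case: (P x).
Qed.

Local Open Scope ring_scope.

Definition trace_form (x y : F4) : F4 :=
  F4add (F4mul x (F4conj y)) (F4mul (F4conj x) y).

Lemma F4_addxx (x : F4) : x + x = 0.
Proof. by case: x. Qed.

Lemma F4_add_eq0 (x y : F4) : x + y = 0 -> x = y.
Proof. by case: x; case: y. Qed.

Lemma F1_neq0 : F1 != 0 :> F4.
Proof. by apply/eqP. Qed.

Lemma trace_formDl x x' y : trace_form (x + x') y = trace_form x y + trace_form x' y.
Proof. by case: x; case: x'; case: y. Qed.

Lemma trace_formC x y : trace_form x y = trace_form y x.
Proof. by case: x; case: y. Qed.

Lemma trace_form0l y : trace_form 0 y = 0.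
Proof. by case: y. Qed.

Lemma trace_form_F2 x y : trace_form x y = 0 \/ trace_form x y = F1.
Proof. by case: x; case: y; auto. Qed.

Lemma trace_form_nondeg x : x != 0 -> exists y, trace_form x y = F1.
Proof. by case: x; rewrite ?eqxx // => _; [exists Fw | exists F1 | exists F1]. Qed.

Section TraceInnerProduct.
Variable n : nat.
Implicit Types (u v w : vec n) (D : {set vec n}).

Lemma vaddE u v : vadd u v = u + v. Proof. by []. Qed.

Lemma tipE u v : tip u v = \sum_i trace_form (u i) (v i).
Proof.
rewrite /tip foldrE big_map.
change (\sum_(i <- enum 'I_n) trace_form (u i) (v i) = \sum_i trace_form (u i) (v i)).
by rewrite big_enum.
Qed.

Lemma tipDl u u' v : tip (u + u') v = tip u v + tip u' v.
Proof.
by rewrite !tipE -big_split; apply: eq_bigr => i _; rewrite ffunE trace_formDl.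
Qed.

Lemma tipC u v : tip u v = tip v u.
Proof. by rewrite !tipE; apply: eq_bigr => i _; rewrite trace_formC. Qed.

Lemma tipDr u v v' : tip u (v + v') = tip u v + tip u v'.
Proof. by rewrite !(tipC u) tipDl. Qed.

Lemma tip0l v : tip 0 v = 0.
Proof. by rewrite tipE big1 // => i _; rewrite ffunE trace_form0l. Qed.

Lemma tip0r u : tip u 0 = 0.
Proof. by rewrite tipC tip0l. Qed.

Lemma addvv u : u + u = 0.
Proof. by apply/ffunP => i; rewrite !ffunE F4_addxx. Qed.

Lemma tip_F2 u v : tip u v = 0 \/ tip u v = F1.
Proof.
rewrite tipE; apply: (big_ind (fun x => x = 0 \/ x = F1)) => [|x y|i _].
- by left.
- by case=> ->; case=> ->; [left|right|right|left].
- exact: trace_form_F2.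
Qed.

Lemma tip_neq0 u v : tip u v != 0 -> tip u v = F1.
Proof. by case: (tip_F2 u v) => ->; rewrite ?eqxx. Qed.

Lemma coord_neq0 u : u != 0 -> exists i, u i != 0.
Proof.
move=> u_neq0; apply/existsP; apply: contraR u_neq0 => /existsPn u_eq0.
by apply/eqP/ffunP => i; rewrite ffunE; apply/eqP/negbNE.
Qed.

Lemma tip_nondeg u : u != 0 -> exists v, tip u v = F1.
Proof.
case/coord_neq0=> i /trace_form_nondeg[c ui_c].
exists [ffun j => if j == i then c else 0].
rewrite tipE (bigD1 i) //= big1 => [|j /negbTE j_neq_i].
  by rewrite ffunE eqxx addr0.
by rewrite ffunE j_neq_i trace_formC trace_form0l.
Qed.

Lemma tdualP D v : reflect (forall u, u \in D -> tip u v = 0) (v \in tdual D).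
Proof. by rewrite inE; apply: (iffP forall_inP) => h u /h /eqP. Qed.

Lemma tdualPn D v : v \notin tdual D -> exists2 a, a \in D & tip a v = F1.
Proof.
rewrite inE negb_forall_in => /exists_inP[a aD av].
by exists a => //; apply: tip_neq0.
Qed.

Lemma tdual0 D : 0 \in tdual D.
Proof. by apply/tdualP => u _; apply: tip0r. Qed.

Lemma tdualS D D' : D \subset D' -> tdual D' \subset tdual D.
Proof.
move=> sDD'; apply/subsetP => v /tdualP v_perp.
by apply/tdualP => u /(subsetP sDD'); apply: v_perp.
Qed.

Lemma tdualT : tdual [set: vec n] = [set 0 : vec n].
Proof.
apply/setP => v; rewrite in_set1; apply/idP/eqP => [/tdualP v_perp | ->].
  apply/eqP; apply: contraT => /tip_nondeg[u vu].
  by have := v_perp u (in_setT u); rewrite tipC vu.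
exact: tdual0.
Qed.

Lemma additive_codeT : additive_code [set: vec n].
Proof. by split=> *; rewrite in_setT. Qed.

End TraceInnerProduct.

Section Halving.
Variable n : nat.
Implicit Types (u v w : vec n) (B D : {set vec n}).

Definition cap_perp D w := [set u in D | tip u w == 0].

Lemma cap_perp_sub D w : cap_perp D w \subset D.
Proof. by apply/subsetP => u; rewrite inE => /andP[]. Qed.

Lemma additive_cap_perp D w : additive_code D -> additive_code (cap_perp D w).
Proof.
case=> D0 DD; split; first by rewrite inE D0 tip0l eqxx.
move=> u v; rewrite !inE => /andP[uD /eqP uw] /andP[vD /eqP vw].
by rewrite DD // vaddE tipDl uw vw addr0 eqxx.
Qed.

(* u |-> u + a exchanges D :&: w^perp with its complement in D. *)
Lemma card_cap_perp_half D w a : additive_code D -> a \in D -> tip a w = F1 ->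
  #|D| = (2 * #|cap_perp D w|)%N.
Proof.
case=> _ DD aD aw; set H := cap_perp D w.
have addaK : involutive (+%R^~ a) by move=> u; rewrite -addrA addvv addr0.
have -> : #|D| = (#|H| + #|D :\: H|)%N.
  by rewrite -(cardsID H D) (setIidPr (cap_perp_sub D w)).
suff -> : D :\: H = [set u + a | u : vec n in H].
  by rewrite card_imset ?addnn ?mul2n //; exact: inv_inj.
apply/setP => u; have -> : (u \in [set x + a | x : vec n in H]) = (u + a \in H).
  by apply/imsetP/idP => [[x xH ->] | uaH]; [rewrite addaK | exists (u + a)].
rewrite !inE; case uD: (u \in D); last first.
  rewrite andbF; apply/esym; apply: contraFF uD => /andP[uaD _].
  by rewrite -[u]addaK; apply: DD.
have uaD : u + a \in D by apply: DD.
rewrite uaD tipDl aw; case: (tip_F2 u w) => ->.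
  by rewrite eqxx add0r (negbTE F1_neq0).
by rewrite (negbTE F1_neq0) F4_addxx eqxx.
Qed.

Lemma card_cap_perp D w : additive_code D ->
  (2 * #|cap_perp D w| = #|D| * (1 + (w \in tdual D)))%N.
Proof.
move=> Dadd; case: (boolP (w \in tdual D)) => [/tdualP w_perp | /tdualPn[a aD aw]].
  suff -> : cap_perp D w = D by rewrite mulnC.
  by apply/setP => u; rewrite inE; apply: andb_idr => /w_perp ->.
by rewrite (card_cap_perp_half Dadd aD aw) muln1.
Qed.

(* Count the pairs (u, v) in D x F4^n with tip u v = 0 by rows and by columns. *)
Lemma card_tdual D : additive_code D -> (#|D| * #|tdual D| = #|{: vec n}|)%N.
Proof.
move=> Dadd; have D0 := Dadd.1.
pose pairs := (\sum_(u in D) #|cap_perp [set: vec n] u|)%N.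
have by_rows : (2 * pairs = #|{: vec n}| * (#|D| + 1))%N.
  rewrite big_distrr /=.
  under eq_bigr do
    rewrite (card_cap_perp _ (additive_codeT n)) (tdualT n) in_set1 cardsT.
  rewrite -big_distrr big_split /= sum1_card (bigD1 (0 : vec n)) //= eqxx.
  by rewrite big1 // => u /andP[_ /negbTE->].
have by_cols : (2 * pairs = #|D| * (#|{: vec n}| + #|tdual D|))%N.
  have -> : pairs = (\sum_v #|cap_perp D v|)%N.
    rewrite /pairs; under eq_bigr => u _ do rewrite /cap_perp card_set_in_sum.
    rewrite exchange_big; apply: eq_big => [v | v _]; first by rewrite in_setT.
    by rewrite card_set_in_sum; apply: eq_bigr => u _; rewrite tipC.
  rewrite (big_distrr 2) /=.
  under eq_bigr do rewrite (card_cap_perp _ Dadd).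
  by rewrite -big_distrr big_split /= sum1_card sum_mem_card.
have : (0 < #|D|)%N by apply/card_gt0P; exists 0.
nia.
Qed.

(* On D, tip u b = tip u w * tip a b. *)
Lemma tdual_cap_perp D w a b : additive_code D -> a \in D -> tip a w = F1 ->
  b \in tdual (cap_perp D w) -> (b \in tdual D) || (w + b \in tdual D).
Proof.
case=> _ DD aD aw /tdualP b_perp.
have b_on_H u : u \in D -> tip u w = 0 -> tip u b = 0.
  by move=> uD uw; apply: b_perp; rewrite inE uD uw eqxx.
have b_off_H u : u \in D -> tip u w = F1 -> tip u b = tip a b.
  move=> uD uw; apply: F4_add_eq0; rewrite -tipDl; apply: b_on_H; first exact: DD.
  by rewrite tipDl uw aw F4_addxx.
apply/orP; case: (tip_F2 a b) => ab; [left | right]; apply/tdualP => u uD;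
  rewrite ?tipDr; case: (tip_F2 u w) => uw;
  by rewrite ?(b_on_H u uD uw) ?(b_off_H u uD uw) ?ab ?uw ?addr0 ?F4_addxx.
Qed.

Lemma exists_avoiding_translates B (T : {set vec n}) :
  (#|B|.+1 * #|T| < #|{: vec n}|)%N ->
  exists w, w \notin T /\ forall b, b \in B -> w + b \notin T.
Proof.
move=> small_BT.
pose bad : {set vec n} :=
  [set p.2 - p.1 | p : vec n * vec n in setX ((0 : vec n) |: B) T].
have : (#|bad| < #|{: vec n}|)%N.
  apply: leq_ltn_trans (leq_imset_card _ _) _; rewrite cardsX cardsU1.
  by apply: leq_ltn_trans small_BT; rewrite leq_mul2r -add1n leq_add2r leq_b1 orbT.
rewrite -(cardsC bad) -addn1 leq_add2l => /card_gt0P[w].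
rewrite inE => w_good; exists w; split => [|b bB]; apply: contra w_good => wT.
  by apply/imsetP; exists (0, w); rewrite ?inE ?eqxx ?wT //= subr0.
by apply/imsetP; exists (b, w + b); rewrite ?inE ?bB ?orbT ?wT //= addrK.
Qed.

Lemma exists_halving_subcode D B : additive_code D ->
  (forall b, b \in B -> b \notin tdual D) -> (#|B|.+1 < #|D|)%N ->
  exists w, #|D| = (2 * #|cap_perp D w|)%N /\
            forall b, b \in B -> b \notin tdual (cap_perp D w).
Proof.
move=> Dadd B_off small_B.
have : (#|B|.+1 * #|tdual D| < #|{: vec n}|)%N.
  by rewrite -(card_tdual Dadd) ltn_pmul2r //; apply/card_gt0P; exists 0; apply: tdual0.
case/exists_avoiding_translates => w [/tdualPn[a aD aw] wB_off].
exists w; split; first exact: card_cap_perp_half Dadd aD aw.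
move=> b bB; apply/negP => /(tdual_cap_perp Dadd aD aw) /orP[].
  by apply/negP/B_off.
by apply/negP/wB_off.
Qed.

Lemma exists_subcode_pow2_index C B m : additive_code C ->
  (forall b, b \in B -> b \notin tdual C) ->
  (forall j, j < m -> #|B|.+1 * 2 ^ j < #|C|)%N ->
  exists D, [/\ additive_code D, D \subset C, (#|D| * 2 ^ m = #|C|)%N &
                forall b, b \in B -> b \notin tdual D].
Proof.
move=> Cadd B_off; elim: m => [|m IHm] small_B; first by exists C; rewrite muln1.
have [D [Dadd DC D_index B_offD]] := IHm (fun j lt_jm => small_B j (ltnW lt_jm)).
have : (#|B|.+1 < #|D|)%N by rewrite -(ltn_pmul2r (expn_gt0 2 m)) D_index small_B.
case/(exists_halving_subcode Dadd B_offD) => w [D_half B_offH].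
exists (cap_perp D w); split => //.
- exact: additive_cap_perp.
- exact: subset_trans (cap_perp_sub D w) DC.
- by rewrite -D_index D_half expnS mulnCA mulnA.
Qed.

End Halving.

Section Weights.
Variable n : nat.
Implicit Types v : vec n.

Definition supp v := [set i | v i != 0].

Lemma wt_supp v : wt v = #|supp v|. Proof. by []. Qed.

Lemma wt_gt0 v : v != 0 -> (0 < wt v)%N.
Proof. by case/coord_neq0 => i vi; apply/card_gt0P; exists i; rewrite inE. Qed.

Lemma card_supp_eq (S : {set 'I_n}) : #|[set v : vec n | supp v == S]| = (3 ^ #|S|)%N.
Proof.
have card_nz : #|predC1 (0 : F4)| = 3%N by rewrite cardC1 card_F4.
rewrite -card_nz -(card_pffun_on 0 S); apply: eq_card => v.
rewrite inE; apply/eqP/pffun_onP => [<- | [supp_v v_nz]].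
  split=> [|x /mapP[i + ->]]; first by apply/subsetP => i; rewrite !inE.
  by rewrite mem_enum !inE.
apply/setP => i; rewrite inE; apply/idP/idP => [vi | iS].
  by apply: (subsetP supp_v); rewrite inE.
have /v_nz : v i \in image v S by apply: map_f; rewrite mem_enum.
by rewrite !inE.
Qed.

Lemma card_wt_eq k : #|[set v : vec n | wt v == k]| = (3 ^ k * 'C(n, k))%N.
Proof.
rewrite -sum1dep_card (partition_big (@supp) (fun S => #|S| == k)) => [|v]; last first.
  by rewrite wt_supp.
rewrite -[n in 'C(n, _)]card_ord -card_draws -sum1dep_card big_distrr /=.
apply: eq_bigr => S /eqP <-; rewrite muln1 sum1dep_card -card_supp_eq.
by apply: eq_card => v; rewrite !inE andb_idl // => /eqP <-.
Qed.

Lemma card_wt_between d :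
  #|[set v : vec n | (0 < wt v < d)%N]| = (\sum_(1 <= k < d) 3 ^ k * 'C(n, k))%N.
Proof.
under eq_big_nat => k _ do rewrite -card_wt_eq -sum_mem_card.
rewrite exchange_big -sum_mem_card; apply: eq_bigr => v _.
transitivity (\sum_(1 <= k < d | k == wt v) 1)%N.
  by rewrite big_nat1_eq inE; case: ifP.
rewrite big_mkcond /=; apply: eq_bigr => k _.
by rewrite inE eq_sym; case: (k == wt v).
Qed.

End Weights.

Lemma halving_budget S N m : (0 < m <= N)%N -> (S * (2 ^ m - 1) < 2 ^ N - 1)%N ->
  forall j, (j < m)%N -> (S.+1 * 2 ^ j < 2 ^ N)%N.
Proof.
case: m => // p /andP[_ lt_pN] budget j le_jp.
apply: leq_ltn_trans (_ : S.+1 * 2 ^ p < _)%N; first by rewrite leq_mul2l leq_pexp2l.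
have split_N : (2 ^ N = 2 ^ p * 2 ^ (N - p))%N by rewrite -expnD subnKC // ltnW.
have P_gt0 : (0 < 2 ^ p)%N by rewrite expn_gt0.
have Q_ge2 : (2 <= 2 ^ (N - p))%N.
  by rewrite -[X in (X <= _)%N]expn1 leq_pexp2l // subn_gt0.
(* With P = 2^p and Q = 2^(N-p): S (2P - 1) < PQ - 1 and S <= S P give (S + 1) P < PQ. *)
move: budget; rewrite split_N expnS; have := leq_pmulr S P_gt0.
move: (2 ^ p)%N (2 ^ (N - p))%N P_gt0 Q_ge2 => P Q; nia.
Qed.

Lemma nat_budget_of_rat S N m : (0 < m)%N ->
  (S%:R : rat) < ((2 ^ N)%:R - 1) / ((2 ^ m)%:R - 1) -> (S * (2 ^ m - 1) < 2 ^ N - 1)%N.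
Proof.
move=> m_gt0; have natrB1 k : (2 ^ k)%:R - 1 = (2 ^ k - 1)%N%:R :> rat.
  by rewrite natrB ?expn_gt0.
rewrite ltr_pdivlMr; last by rewrite subr_gt0 ltr1n -[1%N](expn0 2) ltn_exp2l.
by rewrite !natrB1 -natrM ltr_nat.
Qed.

Theorem mainTheorem9 (n k1 k2 d1 d : nat) (C1 : {set vec n}) :
  (1 <= n)%N -> (k1 < k2)%N -> (k2 <= n)%N ->
  additive_code C1 -> self_orth C1 -> #|C1| = (2 ^ (n - k1))%N ->
  (forall v, v \in tdual C1 -> v != vzero n -> (d1 <= wt v)%N) ->
  (1 <= d)%N ->
  (\sum_(1 <= i < d) ((3 ^ i * 'C(n, i))%N)%:R : rat)
    < ((2 ^ (n - k1))%N%:R - 1) / ((2 ^ (k2 - k1))%N%:R - 1) ->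
  exists C2 : {set vec n},
    [/\ additive_code C2, self_orth C2, C2 \subset C1, #|C2| = (2 ^ (n - k2))%N &
        forall v, v \in tdual C2 -> v != vzero n -> (minn d d1 <= wt v)%N].
Proof.
move=> _ lt_k12 le_k2n C1add C1so C1card C1dist _.
have m_gt0 : (0 < k2 - k1)%N by rewrite subn_gt0.
rewrite -natr_sum => /(nat_budget_of_rat m_gt0) budget.
pose B := [set v : vec n | (0 < wt v < d)%N && (v \notin tdual C1)].
have B_off b : b \in B -> b \notin tdual C1 by rewrite inE => /andP[].
have card_B : (#|B| <= \sum_(1 <= i < d) 3 ^ i * 'C(n, i))%N.
  rewrite -card_wt_between; apply/subset_leq_card/subsetP => v.
  by rewrite !inE => /andP[].
have small_B j : (j < k2 - k1)%N -> (#|B|.+1 * 2 ^ j < #|C1|)%N.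
  move=> lt_j; have m_le : (0 < k2 - k1 <= n - k1)%N by rewrite m_gt0 leq_sub2r.
  rewrite C1card; apply: leq_ltn_trans (halving_budget m_le budget lt_j).
  by rewrite leq_mul2r ltnS card_B orbT.
have [C2 [C2add C2C1 C2index B_offC2]] := exists_subcode_pow2_index C1add B_off small_B.
exists C2; split => //.
- exact: subset_trans C2C1 (subset_trans C1so (tdualS C2C1)).
- apply/eqP; rewrite -(eqn_pmul2r (expn_gt0 2 (k2 - k1))) C2index C1card -expnD.
  by rewrite addnBA ?subnK // ltnW.
- move=> v vC2 v_neq0; case: (boolP (v \in tdual C1)) => vC1.
    exact: leq_trans (geq_minr _ _) (C1dist v vC1 v_neq0).
  apply: leq_trans (geq_minl _ _) _; rewrite leqNgt; apply: contraL vC2 => lt_vd.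
  by apply: B_offC2; rewrite inE vC1 wt_gt0 ?lt_vd.
Qed.
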